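(* Let $\phi_3(x)=\sqrt2\,\mathrm{sech}(x)$, $T(x)=\int_{\mathbb R}e^{-\sqrt2|x-y|}\mathrm{sech}^2(y)\,dy$, $R_1=-x\phi_3\phi_3'-\tfrac{1}{4\sqrt2}(3-\phi_3^2)T-\tfrac{\phi_3'}{2\sqrt2\phi_3}T'$, $R_2=\tfrac12\phi_3^2+\tfrac{3}{4\sqrt2}T+\tfrac{\phi_3'}{2\sqrt2\phi_3}T'$, $E=\tfrac12\phi_3(\tfrac14-\log\phi_3)+\tfrac12x\phi_3'$, $F=E+\phi_3\log\phi_3$, $\Delta_1=F(3(1-\phi_3^2)^2-1)+\phi_3(1-\phi_3^2)^2+6\phi_3(1-\phi_3^2)R_1-2\phi_3R_2$, $\Delta_2=F(1-\phi_3^2)+\phi_3R_1+\phi_3(1-\phi_3^2)R_2$, $h_{3,1}=\tfrac12\phi_3^2\cos x+\tfrac{\phi_3'}{\phi_3}\sin x$, $h_{3,2}=\tfrac{\phi_3'}{\phi_3}\sin x$, and with $\langle f,g\rangle=\int_{\mathbb R}fg\,dx$ set $\gamma_1=\langle\Delta_1,h_{3,1}\rangle$, $\gamma_2=2\langle\Delta_2,h_{3,2}\rangle$, $\gamma_3=\langle(6x\tanh x\,\mathrm{sech}^2x-\tfrac72\mathrm{sech}^2x)\phi_3(1-\phi_3^2),h_{3,1}\rangle$, $\gamma_4=-2\langle E,h_{3,1}\rangle$. For integers $k\ge1$ set (integrals over $\mathbb R$ in $x$) $p_k=\int\mathrm{sech}^k\cos$, $q_k=\int\mathrm{sech}^k\log(\mathrm{sech})\cos$,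 $r_k=\int\mathrm{sech}^kT\cos$, $s_k=\int\mathrm{sech}^kT\tanh\sin$, $a_k=\int x\,\mathrm{sech}^k\tanh\cos$. Then \begin{align*} \gamma_1=&\sqrt2\Big(2p_1+\big(-9\log2-\tfrac{97}{2}\big)p_3+(24\log2+110)p_5+\big(-15\log2-\tfrac{127}{2}\big)p_7\Big)\\ &+\sqrt2\big(q_1-19q_3+48q_5-30q_7-a_1+56a_3-222a_5+180a_7\big)\\ &+4r_1-4r_3-28r_5+30r_7+2s_1+22s_3-30s_5,\\ \gamma_2=&\sqrt2\Big(\big(\tfrac12\log2+\tfrac94\big)p_1+(-4\log2-6)p_3+(4\log2-18)p_5+24p_7\Big)\\ &+\sqrt2\big(q_1-8q_3+8q_5-a_1+21a_3-30a_5\big)+2r_3-2r_5-4s_3+10s_5,\\ \gamma_3=&\sqrt2\Big(-\tfrac{33}{2}p_3+\tfrac{127}{2}p_5-47p_7+18a_3-84a_5+72a_7\Big),\\ \gamma_4=&\sqrt2\big(q_1-q_3+a_1-2a_3\big). \end{align*}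
   Context: $\mathrm{sech},\tanh,\cos,\sin$ denote the functions $\mathrm{sech}(x),\tanh(x),\cos(x),\sin(x)$, products are pointwise, primes denote $d/dx$. *)

From Stdlib Require Import Reals.
From Coquelicot Require Import Coquelicot.
Open Scope R_scope.

Definition sech (x : R) : R := / cosh x.

Definition Integral (f : R -> R) : R :=
  RInt_gen f (Rbar_locally m_infty) (Rbar_locally p_infty).

Definition ip (f g : R -> R) : R := Integral (fun x => f x * g x).

Definition phi3 (x : R) : R := sqrt 2 * sech x.
Definition dphi3 (x : R) : R := Derive phi3 x.

Definition T (x : R) : R :=
  Integral (fun y => exp (- sqrt 2 * Rabs (x - y)) * (sech y) ^ 2).
Definition dT (x : R) : R := Derive T x.

Definition R1 (x : R) : R :=
  - x * phi3 x * dphi3 x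
  - / (4 * sqrt 2) * (3 - phi3 x ^ 2) * T x
  - dphi3 x / (2 * sqrt 2 * phi3 x) * dT x.

Definition R2 (x : R) : R :=
  / 2 * phi3 x ^ 2 + 3 / (4 * sqrt 2) * T x
  + dphi3 x / (2 * sqrt 2 * phi3 x) * dT x.

Definition E (x : R) : R :=
  / 2 * phi3 x * (/ 4 - ln (phi3 x)) + / 2 * x * dphi3 x.

Definition F (x : R) : R := E x + phi3 x * ln (phi3 x).

Definition Delta1 (x : R) : R :=
  F x * (3 * (1 - phi3 x ^ 2) ^ 2 - 1) + phi3 x * (1 - phi3 x ^ 2) ^ 2
  + 6 * phi3 x * (1 - phi3 x ^ 2) * R1 x - 2 * phi3 x * R2 x.

Definition Delta2 (x : R) : R :=
  F x * (1 - phi3 x ^ 2) + phi3 x * R1 x + phi3 x * (1 - phi3 x ^ 2) * R2 x.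

Definition h31 (x : R) : R :=
  / 2 * phi3 x ^ 2 * cos x + dphi3 x / phi3 x * sin x.
Definition h32 (x : R) : R := dphi3 x / phi3 x * sin x.

Definition gamma1 : R := ip Delta1 h31.
Definition gamma2 : R := 2 * ip Delta2 h32.
Definition gamma3 : R :=
  ip (fun x => (6 * x * tanh x * sech x ^ 2 - 7 / 2 * sech x ^ 2)
                * phi3 x * (1 - phi3 x ^ 2)) h31.
Definition gamma4 : R := - 2 * ip E h31.

Definition p (k : nat) : R := Integral (fun x => sech x ^ k * cos x).
Definition q (k : nat) : R := Integral (fun x => sech x ^ k * ln (sech x) * cos x).
Definition r (k : nat) : R := Integral (fun x => sech x ^ k * T x * cos x).
Definition s (k : nat) : R := Integral (fun x => sech x ^ k * T x * tanh x * sin x).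
Definition a (k : nat) : R := Integral (fun x => x * sech x ^ k * tanh x * cos x).

From Pilot Require Import Defs.
From Stdlib Require Import Reals Lra Lia FunctionalExtensionality.
From Coquelicot Require Import Coquelicot.
Open Scope R_scope.

(* Write [T x = U x + U (- x)] with [U x = RInt_{-oo}^x exp (- sqrt 2 (x - y)) sech y ^ 2 dy].
   Then [U' = sech ^ 2 - sqrt 2 U], so [T] is differentiable with
   [T' = sqrt 2 (U (- x) - U x)], and [0 <= U <= 2] gives [|T| <= 4].

   With [phi3 = sqrt 2 sech], [phi3' / phi3 = - tanh] and [ln phi3 = ln 2 / 2 + ln sech],
   each integrand [c Delta h] of a [gamma_i] differs from the claimed combination of the
   integrands of [p_k, q_k, r_k, s_k, a_k] by the derivative of [sech Q], where [Q] (the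
   boundary terms of the integrations by parts) grows at most linearly.  Every function
   which is [O((1 + |x|) sech x)] is integrable over the line and tends to [0] at both
   ends, so the derivative of [sech Q] integrates to [0] and the claimed identities follow
   by linearity. *)

Lemma exp_opp_mul x : exp (- x) * exp x = 1.
Proof. rewrite <- exp_plus, Rplus_opp_l. apply exp_0. Qed.

Lemma exp_le_exp x y : x <= y -> exp x <= exp y.
Proof. intros [Hlt | ->]; [left; now apply exp_increasing | lra]. Qed.

Lemma exp_abs_le_2cosh x : exp (Rabs x) <= 2 * cosh x.
Proof.
  unfold cosh. pose proof (exp_pos x). pose proof (exp_pos (- x)).
  destruct (Rle_dec 0 x); [rewrite Rabs_right | rewrite Rabs_left]; lra.
Qed.

Lemma cosh_ge_1 x : 1 <= cosh x.
Proof.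
  unfold cosh. pose proof (exp_opp_mul x). pose proof (exp_pos x).
  pose proof (pow2_ge_0 (exp x - 1)). nra.
Qed.

Lemma cosh_opp x : cosh (- x) = cosh x.
Proof. unfold cosh. rewrite Ropp_involutive. lra. Qed.

Lemma cosh_sq_sub_sinh_sq x : cosh x ^ 2 - sinh x ^ 2 = 1.
Proof. unfold cosh, sinh. pose proof (exp_opp_mul x). nra. Qed.

Lemma sech_pos x : 0 < sech x.
Proof. unfold sech. pose proof (cosh_ge_1 x). apply Rinv_0_lt_compat. lra. Qed.

Lemma sech_le_1 x : sech x <= 1.
Proof.
  unfold sech. pose proof (cosh_ge_1 x).
  rewrite <- Rinv_1. apply Rinv_le_contravar; lra.
Qed.

Lemma sech_opp x : sech (- x) = sech x.
Proof. unfold sech. now rewrite cosh_opp. Qed.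

Lemma tanh_sq x : tanh x ^ 2 = 1 - sech x ^ 2.
Proof.
  unfold tanh, sech. pose proof (cosh_ge_1 x). pose proof (cosh_sq_sub_sinh_sq x).
  field_simplify; [| lra..]. f_equal. lra.
Qed.

Lemma Rabs_tanh_le_1 x : Rabs (tanh x) <= 1.
Proof.
  pose proof (tanh_sq x). pose proof (sech_pos x).
  apply Rabs_le. split; nra.
Qed.

Lemma is_derive_sech x : is_derive sech x (- (sech x * tanh x)).
Proof.
  pose proof (cosh_ge_1 x). unfold sech, tanh.
  auto_derive; [lra | field; lra].
Qed.

Lemma is_derive_tanh x : is_derive tanh x (sech x ^ 2).
Proof.
  pose proof (cosh_ge_1 x). pose proof (cosh_sq_sub_sinh_sq x). unfold sech, tanh.
  auto_derive; [lra |]. field_simplify; [| lra..]. f_equal. lra.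
Qed.

Lemma ex_derive_sech x : ex_derive sech x.
Proof. eexists. apply is_derive_sech. Qed.

Lemma ex_derive_tanh x : ex_derive tanh x.
Proof. eexists. apply is_derive_tanh. Qed.

Lemma Derive_sech x : Derive sech x = - (sech x * tanh x).
Proof. apply is_derive_unique, is_derive_sech. Qed.

Lemma Derive_tanh x : Derive tanh x = sech x ^ 2.
Proof. apply is_derive_unique, is_derive_tanh. Qed.

(* [2 cosh x >= exp |x| = exp (|x| / 4) ^ 4 >= (1 + |x| / 4) ^ 4 >= (1 + |x|) ^ 3 / 64]. *)
Lemma sech_decay x : (1 + Rabs x) ^ 3 * sech x <= 128.
Proof.
  pose proof (exp_abs_le_2cosh x). pose proof (cosh_ge_1 x).
  set (a := Rabs x) in *. assert (Ha : 0 <= a) by apply Rabs_pos.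
  assert (Hq : 1 + a / 4 <= exp (a / 4)) by apply exp_ineq1_le.
  assert (Hexp : exp a = exp (a / 4) ^ 4).
  { simpl. rewrite Rmult_1_r, <- !exp_plus. f_equal. field. }
  assert (Hpow : (1 + a) ^ 3 <= 64 * (1 + a / 4) ^ 4).
  { assert (0 <= a ^ 2) by nra. assert (0 <= a ^ 3) by (simpl; nra). simpl; nra. }
  assert (Hq4 : (1 + a / 4) ^ 4 <= exp (a / 4) ^ 4) by (apply pow_incr; lra).
  unfold sech. apply (Rmult_le_reg_r (cosh x)); [lra |].
  rewrite Rmult_assoc, Rinv_l by lra. lra.
Qed.

Lemma Rabs_ln_sech_le x : Rabs (ln (sech x)) <= Rabs x.
Proof.
  unfold sech. pose proof (cosh_ge_1 x). pose proof (exp_abs_le_2cosh x).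
  rewrite ln_Rinv, Rabs_Ropp by lra.
  assert (0 <= ln (cosh x)) by (rewrite <- ln_1; apply ln_le; lra).
  assert (ln (cosh x) <= Rabs x).
  { rewrite <- (ln_exp (Rabs x)). apply ln_le; [lra |].
    unfold cosh. pose proof (exp_pos x). pose proof (exp_pos (- x)).
    destruct (Rle_dec 0 x).
    - rewrite Rabs_right by lra.
      assert (exp (- x) <= exp x) by (apply exp_le_exp; lra). lra.
    - rewrite Rabs_left by lra.
      assert (exp x <= exp (- x)) by (apply exp_le_exp; lra). lra. }
  rewrite Rabs_right; lra.
Qed.

(** * Bounds by [(1 + |x|) ^ n * sech x ^ s] *)

Definition dominated (n s : nat) (f : R -> R) : Prop :=
  exists K, forall x, Rabs (f x) <= K * ((1 + Rabs x) ^ n * sech x ^ s).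

Lemma dominated_weight_pos n s x : 0 < (1 + Rabs x) ^ n * sech x ^ s.
Proof.
  pose proof (Rabs_pos x). pose proof (sech_pos x).
  apply Rmult_lt_0_compat; apply pow_lt; lra.
Qed.

Lemma dominated_nonneg_bound n s f :
  dominated n s f ->
  exists K, 0 <= K /\ forall x, Rabs (f x) <= K * ((1 + Rabs x) ^ n * sech x ^ s).
Proof.
  intros [K HK]. exists K. split; [| exact HK].
  pose proof (HK 0). pose proof (Rabs_pos (f 0)). pose proof (dominated_weight_pos n s 0). nra.
Qed.

Lemma sech_pow_antimono s s' x : (s' <= s)%nat -> sech x ^ s <= sech x ^ s'.
Proof.
  intros Hs. pose proof (sech_pos x). pose proof (sech_le_1 x).
  replace s with (s' + (s - s'))%nat by lia. rewrite pow_add.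
  rewrite <- (Rmult_1_r (sech x ^ s')) at 2.
  apply Rmult_le_compat_l; [apply pow_le; lra |].
  rewrite <- (pow1 (s - s')). apply pow_incr. lra.
Qed.

Lemma dominated_weaken n n' s s' f :
  (n <= n')%nat -> (s' <= s)%nat -> dominated n s f -> dominated n' s' f.
Proof.
  intros Hn Hs Hf. destruct (dominated_nonneg_bound _ _ _ Hf) as (K & HK0 & HK).
  exists K. intros x. pose proof (Rabs_pos x). pose proof (sech_pos x).
  eapply Rle_trans; [apply HK |]. apply Rmult_le_compat_l; [lra |].
  apply Rmult_le_compat; try (apply pow_le; lra).
  - apply Rle_pow; [lra | exact Hn].
  - now apply sech_pow_antimono.
Qed.

Lemma dominated_bounded M f : (forall x, Rabs (f x) <= M) -> dominated 0 0 f.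
Proof. intros Hf. exists M. intros x. simpl. rewrite !Rmult_1_r. apply Hf. Qed.

Lemma dominated_const c : dominated 0 0 (fun _ => c).
Proof. apply (dominated_bounded (Rabs c)). intros; lra. Qed.

Lemma dominated_id : dominated 1 0 (fun x => x).
Proof. exists 1. intros x. simpl. lra. Qed.

Lemma dominated_sech : dominated 0 1 sech.
Proof. exists 1. intros x. pose proof (sech_pos x). simpl. rewrite Rabs_right; lra. Qed.

Lemma dominated_tanh : dominated 0 0 tanh.
Proof. apply (dominated_bounded 1), Rabs_tanh_le_1. Qed.

Lemma dominated_sin : dominated 0 0 sin.
Proof. apply (dominated_bounded 1). intros x. apply Rabs_le, SIN_bound. Qed.

Lemma dominated_cos : dominated 0 0 cos.
Proof. apply (dominated_bounded 1). intros x. apply Rabs_le, COS_bound. Qed.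

Lemma dominated_ln_sech : dominated 1 0 (fun x => ln (sech x)).
Proof.
  exists 1. intros x. pose proof (Rabs_ln_sech_le x). simpl. lra.
Qed.

Lemma dominated_plus n1 s1 n2 s2 f g :
  dominated n1 s1 f -> dominated n2 s2 g ->
  dominated (Nat.max n1 n2) (Nat.min s1 s2) (fun x => f x + g x).
Proof.
  intros Hf Hg.
  destruct (dominated_nonneg_bound _ _ _ (dominated_weaken _ (Nat.max n1 n2) _ (Nat.min s1 s2) _
    (Nat.le_max_l _ _) (Nat.le_min_l _ _) Hf)) as (K & _ & HK).
  destruct (dominated_nonneg_bound _ _ _ (dominated_weaken _ (Nat.max n1 n2) _ (Nat.min s1 s2) _
    (Nat.le_max_r _ _) (Nat.le_min_r _ _) Hg)) as (L & _ & HL).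
  exists (K + L). intros x. eapply Rle_trans; [apply Rabs_triang |].
  specialize (HK x). specialize (HL x). lra.
Qed.

Lemma dominated_opp n s f : dominated n s f -> dominated n s (fun x => - f x).
Proof. intros [K HK]. exists K. intros x. rewrite Rabs_Ropp. apply HK. Qed.

Lemma dominated_minus n1 s1 n2 s2 f g :
  dominated n1 s1 f -> dominated n2 s2 g ->
  dominated (Nat.max n1 n2) (Nat.min s1 s2) (fun x => f x - g x).
Proof. intros Hf Hg. apply (dominated_plus _ _ _ _ f (fun x => - g x) Hf), dominated_opp, Hg. Qed.

Lemma dominated_mult n1 s1 n2 s2 f g :
  dominated n1 s1 f -> dominated n2 s2 g ->
  dominated (n1 + n2) (s1 + s2) (fun x => f x * g x).
Proof.
  intros Hf Hg.
  destruct (dominated_nonneg_bound _ _ _ Hf) as (K & HK0 & HK).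
  destruct (dominated_nonneg_bound _ _ _ Hg) as (L & HL0 & HL).
  exists (K * L). intros x. rewrite Rabs_mult, !pow_add.
  pose proof (dominated_weight_pos n1 s1 x). pose proof (dominated_weight_pos n2 s2 x).
  replace (K * L * ((1 + Rabs x) ^ n1 * (1 + Rabs x) ^ n2 * (sech x ^ s1 * sech x ^ s2)))
    with ((K * ((1 + Rabs x) ^ n1 * sech x ^ s1)) * (L * ((1 + Rabs x) ^ n2 * sech x ^ s2)))
    by ring.
  apply Rmult_le_compat; auto using Rabs_pos.
Qed.

Lemma dominated_pow n s k f : dominated n s f -> dominated (k * n) (k * s) (fun x => f x ^ k).
Proof.
  intros Hf. induction k as [| k IH]; simpl.
  - apply dominated_const.
  - apply (dominated_mult _ _ _ _ f (fun x => f x ^ k) Hf IH).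
Qed.

(** * Integrals over the real line *)

Lemma ex_RInt_of_continuous (f : R -> R) a b : (forall x, continuous f x) -> ex_RInt f a b.
Proof. intros Hf. apply (ex_RInt_continuous (V := R_CompleteNormedModule)). auto. Qed.

Lemma is_RInt_gen_derive {Fa Fb : (R -> Prop) -> Prop} {FFa : Filter Fa} {FFb : Filter Fb}
    (F f : R -> R) (la lb : R) :
  (forall x, is_derive F x (f x)) -> (forall x, continuous f x) ->
  filterlim F Fa (locally la) -> filterlim F Fb (locally lb) ->
  is_RInt_gen f Fa Fb (lb - la).
Proof.
  intros HF Hf Ha Hb.
  assert (HD : forall x, Derive F x = f x) by (intros; now apply is_derive_unique).
  apply (is_RInt_gen_ext (Derive F)).
  - apply filter_forall. intros. apply HD.
  - apply is_RInt_gen_Derive; auto; apply filter_forall; intros.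
    + eexists. apply HF.
    + apply (continuous_ext f); [intros; now rewrite HD | apply Hf].
Qed.

Lemma is_RInt_inv_sq K a b : 0 < a <= b -> is_RInt (fun t => K / t ^ 2) a b (K / a - K / b).
Proof.
  intros Hab.
  replace (K / a - K / b) with (- K / b - - K / a) by (field; lra).
  apply (is_RInt_derive (fun t => - K / t)); rewrite Rmin_left, Rmax_right by lra;
    intros t Ht.
  - auto_derive; [lra | field; lra].
  - apply (ex_derive_continuous (fun t => K / t ^ 2)). auto_derive. apply Rgt_not_eq. nra.
Qed.

Lemma Rabs_RInt_tail_le (f : R -> R) K a b :
  (forall x, continuous f x) -> (forall x, 1 <= x -> Rabs (f x) * x ^ 2 <= K) ->
  1 <= a <= b -> Rabs (RInt f a b) <= K / a.
Proof.
  intros Hc Hf Hab.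
  assert (HK : 0 <= K) by (pose proof (Hf 1 (Rle_refl 1)); pose proof (Rabs_pos (f 1)); lra).
  eapply Rle_trans; [apply abs_RInt_le; [lra | now apply ex_RInt_of_continuous] |].
  apply Rle_trans with (RInt (fun t => K / t ^ 2) a b).
  - apply RInt_le; [lra | | eexists; apply is_RInt_inv_sq; lra |].
    + apply ex_RInt_of_continuous. intros. apply (continuous_comp f Rabs); auto.
      apply continuous_Rabs.
    + intros t Ht. specialize (Hf t ltac:(lra)). apply (Rmult_le_reg_r (t ^ 2)); [nra |].
      unfold Rdiv. rewrite Rmult_assoc, Rinv_l by nra. lra.
  - rewrite (is_RInt_unique _ _ _ _ (is_RInt_inv_sq K a b ltac:(lra))).
    assert (0 <= K / b) by (apply Rdiv_le_0_compat; lra). lra.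
Qed.

Lemma ex_lim_RInt0_p_infty (f : R -> R) K :
  (forall x, continuous f x) -> (forall x, 1 <= x -> Rabs (f x) * x ^ 2 <= K) ->
  exists l, filterlim (RInt f 0) (Rbar_locally p_infty) (locally l).
Proof.
  intros Hc Hf.
  assert (HK : 0 <= K) by (pose proof (Hf 1 (Rle_refl 1)); pose proof (Rabs_pos (f 1)); lra).
  apply (filterlim_locally_cauchy (F := Rbar_locally p_infty)). intros eps.
  pose proof (cond_pos eps).
  assert (HKe : 0 <= K / eps) by (apply Rdiv_le_0_compat; lra).
  exists (fun y => 1 + K / eps < y). split; [now exists (1 + K / eps) |].
  assert (Hsmall : forall a, 1 + K / eps < a -> K / a < eps).
  { intros a Ha. apply (Rmult_lt_reg_r a); [lra |].
    unfold Rdiv. rewrite Rmult_assoc, Rinv_l, Rmult_1_r by lra.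
    replace K with (K / eps * eps) by (field; lra). nra. }
  intros u v Hu Hv. change (Rabs (RInt f 0 v - RInt f 0 u) < eps).
  assert (Hdiff : RInt f 0 v - RInt f 0 u = RInt f u v).
  { rewrite <- (RInt_Chasles f 0 u v) by now apply ex_RInt_of_continuous.
    change (RInt f 0 u + RInt f u v - RInt f 0 u = RInt f u v). ring. }
  rewrite Hdiff.
  destruct (Rle_dec u v).
  - eapply Rle_lt_trans; [apply (Rabs_RInt_tail_le f K); auto; lra | now apply Hsmall].
  - rewrite <- (opp_RInt_swap f) by now apply ex_RInt_of_continuous.
    change (Rabs (- RInt f v u) < eps). rewrite Rabs_Ropp.
    eapply Rle_lt_trans; [apply (Rabs_RInt_tail_le f K); auto; lra | now apply Hsmall].
Qed.

Lemma ex_lim_RInt0_m_infty (f : R -> R) K :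
  (forall x, continuous f x) -> (forall x, x <= -1 -> Rabs (f x) * x ^ 2 <= K) ->
  exists l, filterlim (RInt f 0) (Rbar_locally m_infty) (locally l).
Proof.
  intros Hc Hf. set (g y := - f (- y)).
  assert (Hg : forall x, RInt f 0 (- x) = RInt g 0 x).
  { intros x. symmetry. apply is_RInt_unique.
    apply (is_RInt_comp_opp f). rewrite Ropp_0.
    apply (RInt_correct (V := R_CompleteNormedModule)), ex_RInt_of_continuous, Hc. }
  destruct (ex_lim_RInt0_p_infty g K) as [l Hl].
  - intros x. apply (continuous_opp (fun y => f (- y))), (continuous_comp Ropp f).
    + apply (ex_derive_continuous Ropp). auto_derive. exact I.
    + apply Hc.
  - intros x Hx. unfold g. rewrite Rabs_Ropp. replace (x ^ 2) with ((- x) ^ 2) by ring.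
    apply Hf. lra.
  - exists l. apply (filterlim_ext (fun x => RInt g 0 (- x))).
    + intros x. now rewrite <- Hg, Ropp_involutive.
    + eapply filterlim_comp; [apply (filterlim_Rbar_opp m_infty) | exact Hl].
Qed.

Lemma dominated_1_1_tail f :
  dominated 1 1 f -> exists K, 0 <= K /\ forall x, Rabs (f x) * (1 + Rabs x) ^ 2 <= K.
Proof.
  intros Hf. destruct (dominated_nonneg_bound _ _ _ Hf) as (K & HK0 & HK).
  exists (128 * K). split; [lra |]. intros x.
  pose proof (sech_decay x). pose proof (Rabs_pos x).
  apply Rle_trans with (K * ((1 + Rabs x) ^ 3 * sech x)); [| nra].
  replace (K * ((1 + Rabs x) ^ 3 * sech x))
    with (K * ((1 + Rabs x) ^ 1 * sech x ^ 1) * (1 + Rabs x) ^ 2) by ring.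
  apply Rmult_le_compat_r; [apply pow_le; lra | apply HK].
Qed.

Lemma ex_RInt_gen_dominated f :
  (forall x, continuous f x) -> dominated 1 1 f ->
  ex_RInt_gen f (Rbar_locally m_infty) (Rbar_locally p_infty).
Proof.
  intros Hc Hf. destruct (dominated_1_1_tail f Hf) as (K & _ & HK).
  assert (Htail : forall x, 1 <= Rabs x -> Rabs (f x) * x ^ 2 <= K).
  { intros x Hx. eapply Rle_trans; [| apply (HK x)].
    apply Rmult_le_compat_l; [apply Rabs_pos |].
    rewrite <- (pow2_abs x). apply pow_incr. pose proof (Rabs_pos x). lra. }
  destruct (ex_lim_RInt0_m_infty f K Hc) as [la Hla].
  { intros x Hx. apply Htail. rewrite Rabs_left; lra. }
  destruct (ex_lim_RInt0_p_infty f K Hc) as [lb Hlb].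
  { intros x Hx. apply Htail. rewrite Rabs_right; lra. }
  exists (lb - la). apply (is_RInt_gen_derive (RInt f 0)); auto.
  intros x. apply (is_derive_RInt f (RInt f 0) 0 x); [| apply Hc].
  apply filter_forall. intros y.
  apply (RInt_correct (V := R_CompleteNormedModule)), ex_RInt_of_continuous, Hc.
Qed.

Lemma dominated_lim_0 (F : (R -> Prop) -> Prop) {FF : Filter F} f :
  (forall M, F (fun x => M < Rabs x)) -> dominated 1 1 f -> filterlim f F (locally 0).
Proof.
  intros HF Hf. destruct (dominated_1_1_tail f Hf) as (K & HK0 & HK).
  apply filterlim_locally. intros eps. pose proof (cond_pos eps).
  apply (filter_imp (fun x => K / eps < Rabs x)); [| apply HF].
  intros x Hx. change (Rabs (f x - 0) < eps). rewrite Rminus_0_r.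
  specialize (HK x). set (a := Rabs x) in *. assert (0 <= a) by apply Rabs_pos.
  assert (HKe : K < eps * a).
  { apply (Rmult_lt_reg_r (/ eps)); [now apply Rinv_0_lt_compat |].
    replace (eps * a * / eps) with a by (field; lra). exact Hx. }
  apply (Rmult_lt_reg_r ((1 + a) ^ 2)); [apply pow_lt; lra |].
  assert (eps * a <= eps * (1 + a) ^ 2) by (apply Rmult_le_compat_l; simpl; nra).
  lra.
Qed.

Lemma is_RInt_gen_derive_dominated (H h : R -> R) :
  (forall x, is_derive H x (h x)) -> (forall x, continuous h x) -> dominated 1 1 H ->
  is_RInt_gen h (Rbar_locally m_infty) (Rbar_locally p_infty) 0.
Proof.
  intros HH Hh Hdom. rewrite <- (Rminus_0_r 0).
  apply (is_RInt_gen_derive H); auto.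
  - apply (dominated_lim_0 (Rbar_locally m_infty)); auto. intros M.
    exists (- Rabs M). intros x Hx. pose proof (Rle_abs M). pose proof (Rabs_pos M).
    rewrite Rabs_left; lra.
  - apply (dominated_lim_0 (Rbar_locally p_infty)); auto. intros M.
    exists (Rabs M). intros x Hx. pose proof (Rle_abs M). pose proof (Rabs_pos M).
    rewrite Rabs_right; lra.
Qed.

Lemma is_RInt_gen_Integral_dominated (f : R -> R) :
  (forall x, ex_derive f x) -> dominated 1 1 f ->
  is_RInt_gen f (Rbar_locally m_infty) (Rbar_locally p_infty) (Integral f).
Proof.
  intros Hf Hdom. apply (RInt_gen_correct (V := R_CompleteNormedModule)).
  apply ex_RInt_gen_dominated; [| exact Hdom].
  intros x. apply (ex_derive_continuous f), Hf.
Qed.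

Section LinearCombination.

Context {Fa Fb : (R -> Prop) -> Prop} {FFa : Filter Fa} {FFb : Filter Fb}.

Lemma is_RInt_gen_Rplus (f g : R -> R) lf lg :
  is_RInt_gen f Fa Fb lf -> is_RInt_gen g Fa Fb lg ->
  is_RInt_gen (fun x => f x + g x) Fa Fb (lf + lg).
Proof. apply (is_RInt_gen_plus (V := R_NormedModule)). Qed.

Lemma is_RInt_gen_Rminus (f g : R -> R) lf lg :
  is_RInt_gen f Fa Fb lf -> is_RInt_gen g Fa Fb lg ->
  is_RInt_gen (fun x => f x - g x) Fa Fb (lf - lg).
Proof. apply (is_RInt_gen_minus (V := R_NormedModule)). Qed.

Lemma is_RInt_gen_Rmult (c : R) (f : R -> R) l :
  is_RInt_gen f Fa Fb l -> is_RInt_gen (fun x => c * f x) Fa Fb (c * l).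
Proof. apply (is_RInt_gen_scal (V := R_NormedModule)). Qed.

End LinearCombination.

Lemma Integral_eq_of_exact_remainder (g f H : R -> R) (c l : R) :
  c <> 0 -> (forall x, continuous g x) -> (forall x, continuous f x) ->
  (forall x, is_derive H x (c * g x - f x)) -> dominated 1 1 H ->
  is_RInt_gen f (Rbar_locally m_infty) (Rbar_locally p_infty) l ->
  c * Integral g = l.
Proof.
  intros Hc Hg Hf HH Hdom Hl.
  assert (Hcont : forall x, continuous (fun y => c * g y - f y) x).
  { intros x. apply (continuous_minus (fun y => c * g y) f); [| apply Hf].
    apply (continuous_scal_r c g), Hg. }
  assert (Hrem := is_RInt_gen_derive_dominated H _ HH Hcont Hdom).
  assert (Hcg : is_RInt_gen (fun x => c * g x) (Rbar_locally m_infty) (Rbar_locally p_infty) l).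
  { replace l with (0 + l) by ring.
    eapply is_RInt_gen_ext; [| apply (is_RInt_gen_Rplus _ _ _ _ Hrem Hl)].
    apply filter_forall. intros. simpl. ring. }
  apply (is_RInt_gen_Rmult (/ c)) in Hcg.
  replace l with (c * (/ c * l)) by (field; exact Hc). f_equal.
  unfold Integral. apply (is_RInt_gen_unique (V := R_CompleteNormedModule)).
  eapply is_RInt_gen_ext; [| exact Hcg].
  apply filter_forall. intros. simpl. field. exact Hc.
Qed.

(** * The potential [T] *)

Lemma sqrt2_pos : 0 < sqrt 2.
Proof. apply Rlt_sqrt2_0. Qed.

Lemma sqrt2_sq : sqrt 2 * sqrt 2 = 2.
Proof. apply sqrt_sqrt. lra. Qed.

Lemma exp_sqrt2_cancel x : exp (- sqrt 2 * x) * exp (sqrt 2 * x) = 1.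
Proof. replace (- sqrt 2 * x) with (- (sqrt 2 * x)) by ring. apply exp_opp_mul. Qed.

Definition U_density (y : R) : R := exp (sqrt 2 * y) * sech y ^ 2.

Definition U_lim : R := real (Lim (RInt U_density 0) m_infty).

Definition U (x : R) : R := exp (- sqrt 2 * x) * (RInt U_density 0 x - U_lim).

Lemma U_density_pos y : 0 < U_density y.
Proof.
  unfold U_density. pose proof (sech_pos y).
  apply Rmult_lt_0_compat; [apply exp_pos | nra].
Qed.

Lemma continuous_U_density y : continuous U_density y.
Proof.
  apply (ex_derive_continuous U_density). unfold U_density.
  auto_derive. apply ex_derive_sech.
Qed.

Lemma ex_RInt_U_density a b : ex_RInt U_density a b.
Proof. apply ex_RInt_of_continuous, continuous_U_density. Qed.

Lemma is_derive_RInt_U_density x : is_derive (RInt U_density 0) x (U_density x).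
Proof.
  apply (is_derive_RInt _ _ 0); [| apply continuous_U_density].
  apply filter_forall. intros y.
  apply (RInt_correct (V := R_CompleteNormedModule)), ex_RInt_U_density.
Qed.

Lemma U_lim_spec : filterlim (RInt U_density 0) (Rbar_locally m_infty) (locally U_lim).
Proof.
  destruct (ex_lim_RInt0_m_infty U_density 128 continuous_U_density) as [l Hl].
  - intros x Hx. pose proof (sech_decay x). pose proof (sech_pos x). pose proof (sech_le_1 x).
    assert (exp (sqrt 2 * x) <= 1)
      by (rewrite <- exp_0; apply exp_le_exp; pose proof sqrt2_pos; nra).
    pose proof (exp_pos (sqrt 2 * x)).
    assert (Hw : U_density x <= sech x) by (unfold U_density; simpl; nra).
    assert (Hx2 : x ^ 2 <= (1 + Rabs x) ^ 3) by (rewrite Rabs_left by lra; simpl; nra).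
    rewrite Rabs_right by (left; apply U_density_pos).
    apply Rle_trans with (sech x * (1 + Rabs x) ^ 3); [| lra].
    apply Rmult_le_compat; [left; apply U_density_pos | nra | exact Hw | exact Hx2].
  - unfold U_lim. replace (Lim (RInt U_density 0) m_infty) with (Finite l); [exact Hl |].
    symmetry. now apply is_lim_unique.
Qed.

Lemma filterlim_at_point (f : R -> R) x : filterlim f (at_point x) (locally (f x)).
Proof. intros P HP. exact (locally_singleton _ _ HP). Qed.

Lemma is_RInt_gen_T_kernel_left x :
  is_RInt_gen (fun y => exp (- sqrt 2 * Rabs (x - y)) * sech y ^ 2)
    (Rbar_locally m_infty) (at_point x) (U x).
Proof.
  assert (HP := is_RInt_gen_derive (Fa := Rbar_locally m_infty) (Fb := at_point x)
    (RInt U_density 0) U_density U_lim (RInt U_density 0 x) is_derive_RInt_U_density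
    continuous_U_density U_lim_spec (filterlim_at_point _ x)).
  apply (is_RInt_gen_scal _ (exp (- sqrt 2 * x))) in HP.
  revert HP. apply is_RInt_gen_ext.
  apply (Filter_prod _ _ _ (fun a => a < x) (fun b => b = x)); [now exists x | reflexivity |].
  intros a b Ha ->. simpl. rewrite Rmin_left, Rmax_right by lra. intros y Hy.
  unfold U_density. rewrite Rabs_right by lra.
  change (exp (- sqrt 2 * x) * (exp (sqrt 2 * y) * sech y ^ 2)
    = exp (- sqrt 2 * (x - y)) * sech y ^ 2).
  rewrite <- Rmult_assoc, <- exp_plus. do 2 f_equal. ring.
Qed.

(* On [[x, +oo)] the primitive of [y |-> U_density (- y)] is [y |-> - RInt U_density 0 (- y)]. *)
Lemma is_RInt_gen_T_kernel_right x :
  is_RInt_gen (fun y => exp (- sqrt 2 * Rabs (x - y)) * sech y ^ 2)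
    (at_point x) (Rbar_locally p_infty) (U (- x)).
Proof.
  set (P := RInt U_density 0). set (G y := - P (- y)).
  assert (HG : forall y, is_derive G y (U_density (- y))).
  { intros y. unfold G. auto_derive; [eexists; apply is_derive_RInt_U_density |].
    replace (Derive (fun z => P z) (- y)) with (U_density (- y)); [ring |].
    symmetry. apply is_derive_unique, is_derive_RInt_U_density. }
  assert (Hc : forall y, continuous (fun z => U_density (- z)) y).
  { intros y. apply (ex_derive_continuous (fun z => U_density (- z))). unfold U_density.
    auto_derive. apply ex_derive_sech. }
  assert (HGlim : filterlim G (Rbar_locally p_infty) (locally (- U_lim))).
  { apply (filterlim_comp _ _ _ (fun y => P (- y)) Ropp _ (locally U_lim)).
    - exact (filterlim_comp _ _ _ Ropp P _ _ _ (filterlim_Rbar_opp p_infty) U_lim_spec).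
    - apply (filterlim_opp U_lim). }
  assert (HP := is_RInt_gen_derive (Fa := at_point x) (Fb := Rbar_locally p_infty)
    G (fun y => U_density (- y)) (G x) (- U_lim) HG Hc (filterlim_at_point G x) HGlim).
  apply (is_RInt_gen_scal _ (exp (sqrt 2 * x))) in HP.
  replace (U (- x)) with (scal (exp (sqrt 2 * x)) (- U_lim - G x)).
  2:{ unfold U, G. change (exp (sqrt 2 * x) * (- U_lim - - P (- x))
        = exp (- sqrt 2 * - x) * (P (- x) - U_lim)).
      replace (- sqrt 2 * - x) with (sqrt 2 * x) by ring. ring. }
  revert HP. apply is_RInt_gen_ext.
  apply (Filter_prod _ _ _ (fun a => a = x) (fun b => x < b)); [reflexivity | now exists x |].
  intros a b -> Hb. simpl. rewrite Rmin_left, Rmax_right by lra. intros y Hy.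
  unfold U_density. rewrite Rabs_left, sech_opp by lra.
  change (exp (sqrt 2 * x) * (exp (sqrt 2 * - y) * sech y ^ 2)
    = exp (- sqrt 2 * - (x - y)) * sech y ^ 2).
  rewrite <- Rmult_assoc, <- exp_plus. do 2 f_equal. ring.
Qed.

Lemma T_eq_U x : T x = U x + U (- x).
Proof.
  unfold T, Integral. apply is_RInt_gen_unique.
  exact (is_RInt_gen_Chasles _ x _ _ (is_RInt_gen_T_kernel_left x) (is_RInt_gen_T_kernel_right x)).
Qed.

Lemma is_derive_U x : is_derive U x (sech x ^ 2 - sqrt 2 * U x).
Proof.
  unfold U. auto_derive.
  - repeat split; [apply ex_RInt_U_density |].
    apply filter_forall. intros y. apply continuity_pt_filterlim, continuous_U_density.
  - unfold U_density.
    replace (exp (- sqrt 2 * x) * (1 * (exp (sqrt 2 * x) * sech x ^ 2)))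
      with (exp (- sqrt 2 * x) * exp (sqrt 2 * x) * sech x ^ 2) by ring.
    rewrite exp_sqrt2_cancel. ring.
Qed.

Lemma is_RInt_sech_sq a b : is_RInt (fun y => sech y ^ 2) a b (tanh b - tanh a).
Proof.
  apply (is_RInt_derive tanh); intros y _; [apply is_derive_tanh |].
  apply (ex_derive_continuous (fun y => sech y ^ 2)). auto_derive. apply ex_derive_sech.
Qed.

(* On [[a, x]] the kernel [exp (- sqrt 2 (x - y))] is at most [1], and the mass of
   [sech ^ 2] is [tanh x - tanh a <= 2]. *)
Lemma RInt_U_density_le a x : a <= x -> 0 <= exp (- sqrt 2 * x) * RInt U_density a x <= 2.
Proof.
  intros Ha. split.
  { apply Rmult_le_pos; [left; apply exp_pos |].
    apply RInt_ge_0; [lra | apply ex_RInt_U_density |]. intros y _. left. apply U_density_pos. }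
  rewrite <- (RInt_scal (V := R_CompleteNormedModule)) by apply ex_RInt_U_density.
  apply Rle_trans with (RInt (fun y => sech y ^ 2) a x).
  - apply RInt_le; [lra | | eexists; apply is_RInt_sech_sq |].
    + apply (ex_RInt_scal (V := R_CompleteNormedModule)), ex_RInt_U_density.
    + intros y Hy. unfold U_density.
      change (exp (- sqrt 2 * x) * (exp (sqrt 2 * y) * sech y ^ 2) <= sech y ^ 2).
      rewrite <- Rmult_assoc, <- exp_plus.
      assert (exp (- sqrt 2 * x + sqrt 2 * y) <= 1)
        by (rewrite <- exp_0; apply exp_le_exp; pose proof sqrt2_pos; nra).
      pose proof (sech_pos y). assert (0 <= sech y ^ 2) by nra. nra.
  - rewrite (is_RInt_unique _ _ _ _ (is_RInt_sech_sq a x)).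
    pose proof (Rabs_tanh_le_1 x) as Hx. pose proof (Rabs_tanh_le_1 a) as Ha'.
    apply Rabs_le_between in Hx, Ha'. lra.
Qed.

Lemma U_bounds x : 0 <= U x <= 2.
Proof.
  set (P := RInt U_density 0).
  pose proof (exp_sqrt2_cancel x). pose proof (exp_pos (- sqrt 2 * x)).
  pose proof (exp_pos (sqrt 2 * x)).
  assert (Hseg : forall a, a < x -> P x - 2 * exp (sqrt 2 * x) <= P a <= P x).
  { intros a Ha. destruct (RInt_U_density_le a x ltac:(lra)) as [Hmass0 Hmass2].
    assert (HP : P x - P a = RInt U_density a x).
    { unfold P. rewrite <- (RInt_Chasles U_density 0 a x) by apply ex_RInt_U_density.
      change (RInt U_density 0 a + RInt U_density a x - RInt U_density 0 a
        = RInt U_density a x). ring. }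
    assert (RInt U_density a x <= 2 * exp (sqrt 2 * x)) by nra. nra. }
  assert (Hlow : Rbar_le (P x - 2 * exp (sqrt 2 * x)) U_lim).
  { apply (filterlim_le (F := Rbar_locally m_infty) (fun _ => P x - 2 * exp (sqrt 2 * x)) P).
    - exists x. intros a Ha. apply Hseg, Ha.
    - apply filterlim_const.
    - apply U_lim_spec. }
  assert (Hup : Rbar_le U_lim (P x)).
  { apply (filterlim_le (F := Rbar_locally m_infty) P (fun _ => P x)).
    - exists x. intros a Ha. apply Hseg, Ha.
    - apply U_lim_spec.
    - apply filterlim_const. }
  simpl in Hlow, Hup. unfold U. fold P.
  split; [apply Rmult_le_pos; lra | nra].
Qed.

Lemma ex_derive_U x : ex_derive U x.
Proof. eexists. apply is_derive_U. Qed.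

Lemma Derive_U x : Derive U x = sech x ^ 2 - sqrt 2 * U x.
Proof. apply is_derive_unique, is_derive_U. Qed.

Lemma is_derive_T x : is_derive T x (sqrt 2 * (U (- x) - U x)).
Proof.
  replace T with (fun y => U y + U (- y))
    by (apply functional_extensionality; intros; now rewrite T_eq_U).
  auto_derive; [repeat split; apply ex_derive_U |].
  rewrite !Derive_U, sech_opp. ring.
Qed.

Lemma ex_derive_T x : ex_derive T x.
Proof. eexists. apply is_derive_T. Qed.

Lemma Derive_T x : Derive T x = dT x.
Proof. reflexivity. Qed.

Lemma ex_derive_dT x : ex_derive dT x.
Proof.
  replace dT with (fun y => sqrt 2 * (U (- y) - U y))
    by (apply functional_extensionality; intros; symmetry; apply is_derive_unique, is_derive_T).
  auto_derive. repeat split; apply ex_derive_U.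
Qed.

Lemma Rabs_T_le x : Rabs (T x) <= 4.
Proof.
  rewrite T_eq_U. pose proof (U_bounds x). pose proof (U_bounds (- x)).
  apply Rabs_le. lra.
Qed.

Lemma dominated_T : dominated 0 0 T.
Proof. apply (dominated_bounded 4), Rabs_T_le. Qed.

Lemma phi3_pos x : 0 < phi3 x.
Proof. unfold phi3. apply Rmult_lt_0_compat; [apply sqrt2_pos | apply sech_pos]. Qed.

Lemma dphi3_eq : dphi3 = fun x => - sqrt 2 * sech x * tanh x.
Proof.
  apply functional_extensionality. intros x. apply is_derive_unique. unfold phi3.
  auto_derive; [apply ex_derive_sech |]. rewrite Derive_sech. ring.
Qed.

Lemma ex_derive_phi3 x : ex_derive phi3 x.
Proof. unfold phi3. auto_derive. apply ex_derive_sech. Qed.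

Lemma ex_derive_dphi3 x : ex_derive dphi3 x.
Proof.
  rewrite dphi3_eq. auto_derive. repeat split; [apply ex_derive_sech | apply ex_derive_tanh].
Qed.

Lemma dphi3_div_phi3 x : dphi3 x / phi3 x = - tanh x.
Proof.
  rewrite dphi3_eq. unfold phi3. pose proof (sech_pos x). pose proof sqrt2_pos. field. lra.
Qed.

Lemma dphi3_div_2sqrt2_phi3 x : dphi3 x / (2 * sqrt 2 * phi3 x) = - sqrt 2 / 4 * tanh x.
Proof.
  rewrite dphi3_eq. unfold phi3. pose proof (sech_pos x).
  replace (2 * sqrt 2 * (sqrt 2 * sech x)) with (2 * (sqrt 2 * sqrt 2) * sech x) by ring.
  rewrite sqrt2_sq. field. lra.
Qed.

Lemma inv_4sqrt2 : / (4 * sqrt 2) = sqrt 2 / 8.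
Proof.
  pose proof sqrt2_pos. replace 8 with (4 * (sqrt 2 * sqrt 2)) by (rewrite sqrt2_sq; ring).
  field. lra.
Qed.

Lemma ln_phi3 x : ln (phi3 x) = ln 2 / 2 + ln (sech x).
Proof.
  unfold phi3. pose proof sqrt2_pos. pose proof (sech_pos x).
  rewrite ln_mult by lra. f_equal.
  rewrite <- (sqrt_sqrt 2) at 2 by lra. rewrite ln_mult by lra. field.
Qed.

Lemma sqrt2_pow_SS n : sqrt 2 ^ S (S n) = 2 * sqrt 2 ^ n.
Proof. simpl. rewrite <- Rmult_assoc, sqrt2_sq. ring. Qed.

Lemma tanh_pow_SS x n : tanh x ^ S (S n) = (1 - sech x ^ 2) * tanh x ^ n.
Proof. rewrite <- tanh_sq. simpl. ring. Qed.

Ltac expand_profile :=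
  unfold Delta1, Delta2, Defs.R1, Defs.R2, Defs.F, Defs.E, h31, h32;
  rewrite ?dphi3_div_phi3, ?dphi3_div_2sqrt2_phi3, ?ln_phi3, ?dphi3_eq;
  unfold Rdiv; rewrite ?inv_4sqrt2; unfold Rdiv, phi3.

(* After [ring_simplify], rewriting the powers [sqrt 2 ^ (n + 2)] and [tanh x ^ (n + 2)] leaves
   a normal form modulo [sqrt 2 ^ 2 = 2] and [tanh ^ 2 = 1 - sech ^ 2], on which [field]
   decides the identity.  The [change] restates goals produced by [auto_derive] over [R]. *)
Ltac reduce_sqrt2_tanh :=
  lazymatch goal with |- ?u = ?v => change (@eq R u v) end;
  ring_simplify; repeat first [rewrite sqrt2_pow_SS | rewrite tanh_pow_SS]; field.

Definition p_integrand (k : nat) (x : R) : R := sech x ^ k * cos x.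
Definition q_integrand (k : nat) (x : R) : R := sech x ^ k * ln (sech x) * cos x.
Definition r_integrand (k : nat) (x : R) : R := sech x ^ k * T x * cos x.
Definition s_integrand (k : nat) (x : R) : R := sech x ^ k * T x * tanh x * sin x.
Definition a_integrand (k : nat) (x : R) : R := x * sech x ^ k * tanh x * cos x.

Ltac dominated_infer :=
  lazymatch goal with
  | |- dominated _ _ (fun _ => ?c) => apply dominated_const
  | |- dominated _ _ (fun x => _ + _) => eapply dominated_plus; dominated_infer
  | |- dominated _ _ (fun x => _ - _) => eapply dominated_minus; dominated_infer
  | |- dominated _ _ (fun x => - _) => eapply dominated_opp; dominated_infer
  | |- dominated _ _ (fun x => _ * _) => eapply dominated_mult; dominated_infer
  | |- dominated _ _ (Rmult _) => eapply dominated_mult; dominated_infer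
  | |- dominated _ _ (Rplus _) => eapply dominated_plus; dominated_infer
  | |- dominated _ _ (Rminus _) => eapply dominated_minus; dominated_infer
  | |- dominated _ _ (fun x => _ ^ _) => eapply dominated_pow; dominated_infer
  | |- dominated _ _ (fun x => x) => apply dominated_id
  | |- dominated _ _ (fun x => ln (sech x)) => apply dominated_ln_sech
  | |- _ => first
      [ apply dominated_sech | apply dominated_tanh | apply dominated_sin | apply dominated_cos
      | apply dominated_T ]
  end.

Ltac dominated_tac :=
  eapply dominated_weaken; [| | dominated_infer]; cbn; lia.

Ltac positive :=
  repeat apply Rmult_lt_0_compat; first [apply sech_pos | apply phi3_pos | apply sqrt2_pos | lra].

Ltac smooth :=
  repeat split;
  first [ apply ex_derive_sech | apply ex_derive_tanh | apply ex_derive_T | apply ex_derive_dT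
        | apply ex_derive_phi3 | apply ex_derive_dphi3 | exact I
        | apply Rgt_not_eq; positive | positive ].

Ltac continuous_smooth :=
  intros ?x;
  lazymatch goal with |- continuous ?f ?x => apply (ex_derive_continuous f) end;
  cbv [Delta1 Delta2 Defs.R1 Defs.R2 Defs.F Defs.E h31 h32
       p_integrand q_integrand r_integrand s_integrand a_integrand];
  auto_derive; smooth.

Ltac basis_integral :=
  intros Hk; cbv [p_integrand q_integrand r_integrand s_integrand a_integrand];
  apply is_RInt_gen_Integral_dominated;
  [ intros x; auto_derive; smooth | dominated_tac ].

Lemma is_RInt_gen_p k : (1 <= k)%nat ->
  is_RInt_gen (p_integrand k) (Rbar_locally m_infty) (Rbar_locally p_infty) (p k).
Proof. basis_integral. Qed.

Lemma is_RInt_gen_q k : (1 <= k)%nat ->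
  is_RInt_gen (q_integrand k) (Rbar_locally m_infty) (Rbar_locally p_infty) (q k).
Proof. basis_integral. Qed.

Lemma is_RInt_gen_r k : (1 <= k)%nat ->
  is_RInt_gen (r_integrand k) (Rbar_locally m_infty) (Rbar_locally p_infty) (r k).
Proof. basis_integral. Qed.

Lemma is_RInt_gen_s k : (1 <= k)%nat ->
  is_RInt_gen (s_integrand k) (Rbar_locally m_infty) (Rbar_locally p_infty) (s k).
Proof. basis_integral. Qed.

Lemma is_RInt_gen_a k : (1 <= k)%nat ->
  is_RInt_gen (a_integrand k) (Rbar_locally m_infty) (Rbar_locally p_infty) (a k).
Proof. basis_integral. Qed.

Ltac integrate_combination :=
  lazymatch goal with
  | |- is_RInt_gen _ _ _ (_ + _) => apply is_RInt_gen_Rplus; integrate_combination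
  | |- is_RInt_gen _ _ _ (_ - _) => apply is_RInt_gen_Rminus; integrate_combination
  | |- is_RInt_gen _ _ _ (_ * _) => apply is_RInt_gen_Rmult; integrate_combination
  | |- is_RInt_gen _ _ _ (p _) => apply is_RInt_gen_p; lia
  | |- is_RInt_gen _ _ _ (q _) => apply is_RInt_gen_q; lia
  | |- is_RInt_gen _ _ _ (r _) => apply is_RInt_gen_r; lia
  | |- is_RInt_gen _ _ _ (s _) => apply is_RInt_gen_s; lia
  | |- is_RInt_gen _ _ _ (a _) => apply is_RInt_gen_a; lia
  end.

(** * Reduction of the [gamma_i] *)

Ltac verify_remainder :=
  cbv [p_integrand q_integrand r_integrand s_integrand a_integrand];
  auto_derive; [smooth |]; rewrite ?Derive_sech, ?Derive_tanh, ?Derive_T;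
  expand_profile; reduce_sqrt2_tanh; smooth.

(* [gammaN_integrand] is the pointwise form of the claimed value of [gamma_N], and
   [sech * gammaN_remainder] collects the boundary terms of the integrations by parts that
   reduce [gamma_N] to the basis integrals (found by computer algebra). *)
Definition gamma1_integrand (x : R) : R :=
  sqrt 2 * (2 * p_integrand 1 x + (- 9 * ln 2 - 97 / 2) * p_integrand 3 x
            + (24 * ln 2 + 110) * p_integrand 5 x + (- 15 * ln 2 - 127 / 2) * p_integrand 7 x)
  + sqrt 2 * (q_integrand 1 x - 19 * q_integrand 3 x + 48 * q_integrand 5 x - 30 * q_integrand 7 x
              - a_integrand 1 x + 56 * a_integrand 3 x - 222 * a_integrand 5 x
              + 180 * a_integrand 7 x)
  + 4 * r_integrand 1 x - 4 * r_integrand 3 x - 28 * r_integrand 5 x + 30 * r_integrand 7 x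
  + 2 * s_integrand 1 x + 22 * s_integrand 3 x - 30 * s_integrand 5 x.

Definition gamma1_remainder (x : R) : R :=
  sqrt 2 * ((5 / 8 + ln 2 / 4) * sin x
            + (5 / 8 + ln 2 / 4 + ln (sech x)
               - (15 / 2 + 3 * ln 2 + 6 * ln (sech x)) * sech x ^ 2
               + (11 / 2 + 3 * ln 2 + 6 * ln (sech x)) * sech x ^ 4) * tanh x * cos x
            + (- 1 + 19 * sech x ^ 2 - 48 * sech x ^ 4 + 30 * sech x ^ 6) * x * cos x)
  + (- 4 + 10 * sech x ^ 2 - 6 * sech x ^ 4) * T x * sin x
  + (4 - 6 * sech x ^ 2) * sech x ^ 2 * T x * tanh x * cos x.

Lemma is_derive_gamma1_remainder x :
  is_derive (fun y => sech y * gamma1_remainder y) x (1 * (Delta1 x * h31 x) - gamma1_integrand x).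
Proof. unfold gamma1_remainder, gamma1_integrand. verify_remainder. Qed.

Definition gamma2_integrand (x : R) : R :=
  sqrt 2 * ((/ 2 * ln 2 + 9 / 4) * p_integrand 1 x + (- 4 * ln 2 - 6) * p_integrand 3 x
            + (4 * ln 2 - 18) * p_integrand 5 x + 24 * p_integrand 7 x)
  + sqrt 2 * (q_integrand 1 x - 8 * q_integrand 3 x + 8 * q_integrand 5 x
              - a_integrand 1 x + 21 * a_integrand 3 x - 30 * a_integrand 5 x)
  + 2 * r_integrand 3 x - 2 * r_integrand 5 x - 4 * s_integrand 3 x + 10 * s_integrand 5 x.

Definition gamma2_remainder (x : R) : R :=
  sqrt 2 * ((1 / 4 + ln 2 / 2 + ln (sech x)
             + (3 / 2 - ln 2 - 2 * ln (sech x)) * sech x ^ 2 - 4 * sech x ^ 4) * tanh x * cos x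
            + (- 1 + 7 * sech x ^ 2 - 6 * sech x ^ 4) * x * cos x)
  + (- 2 + 2 * sech x ^ 2) * sech x ^ 2 * T x * sin x.

Lemma is_derive_gamma2_remainder x :
  is_derive (fun y => sech y * gamma2_remainder y) x (2 * (Delta2 x * h32 x) - gamma2_integrand x).
Proof. unfold gamma2_remainder, gamma2_integrand. verify_remainder. Qed.

Definition gamma3_integrand (x : R) : R :=
  sqrt 2 * (- 33 / 2 * p_integrand 3 x + 127 / 2 * p_integrand 5 x - 47 * p_integrand 7 x
            + 18 * a_integrand 3 x - 84 * a_integrand 5 x + 72 * a_integrand 7 x).

Definition gamma3_remainder (x : R) : R :=
  sqrt 2 * sech x ^ 2 * ((- 7 / 2 + 7 * sech x ^ 2) * tanh x * cos x
                         + (6 - 18 * sech x ^ 2 + 12 * sech x ^ 4) * x * cos x).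

Lemma is_derive_gamma3_remainder x :
  is_derive (fun y => sech y * gamma3_remainder y) x
    (1 * ((6 * x * tanh x * sech x ^ 2 - 7 / 2 * sech x ^ 2) * phi3 x * (1 - phi3 x ^ 2) * h31 x)
     - gamma3_integrand x).
Proof. unfold gamma3_remainder, gamma3_integrand. verify_remainder. Qed.

Definition gamma4_integrand (x : R) : R :=
  sqrt 2 * (q_integrand 1 x - q_integrand 3 x + a_integrand 1 x - 2 * a_integrand 3 x).

Definition gamma4_remainder (x : R) : R :=
  sqrt 2 * ((ln 2 / 4 - 1 / 8) * (sin x + tanh x * cos x) + tanh x * cos x * ln (sech x)
            + x * tanh x ^ 2 * cos x).

Lemma is_derive_gamma4_remainder x :
  is_derive (fun y => sech y * gamma4_remainder y) x (-2 * (E x * h31 x) - gamma4_integrand x).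
Proof. unfold gamma4_remainder, gamma4_integrand. verify_remainder. Qed.

Ltac integral_by_remainder integrand remainder c derivative :=
  apply (Integral_eq_of_exact_remainder _ integrand (fun y => sech y * remainder y) c);
  [ lra | continuous_smooth | unfold integrand; continuous_smooth | exact derivative
  | unfold remainder; dominated_tac | unfold integrand; integrate_combination ].

Theorem lemma2p20 :
  gamma1 =
    sqrt 2 * (2 * p 1 + (- 9 * ln 2 - 97 / 2) * p 3 + (24 * ln 2 + 110) * p 5
              + (- 15 * ln 2 - 127 / 2) * p 7)
    + sqrt 2 * (q 1 - 19 * q 3 + 48 * q 5 - 30 * q 7
                - a 1 + 56 * a 3 - 222 * a 5 + 180 * a 7)
    + 4 * r 1 - 4 * r 3 - 28 * r 5 + 30 * r 7 + 2 * s 1 + 22 * s 3 - 30 * s 5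
  /\
  gamma2 =
    sqrt 2 * ((/ 2 * ln 2 + 9 / 4) * p 1 + (- 4 * ln 2 - 6) * p 3
              + (4 * ln 2 - 18) * p 5 + 24 * p 7)
    + sqrt 2 * (q 1 - 8 * q 3 + 8 * q 5 - a 1 + 21 * a 3 - 30 * a 5)
    + 2 * r 3 - 2 * r 5 - 4 * s 3 + 10 * s 5
  /\
  gamma3 =
    sqrt 2 * (- 33 / 2 * p 3 + 127 / 2 * p 5 - 47 * p 7
              + 18 * a 3 - 84 * a 5 + 72 * a 7)
  /\
  gamma4 = sqrt 2 * (q 1 - q 3 + a 1 - 2 * a 3).
Proof.
  split; [| split; [| split]].
  - rewrite <- (Rmult_1_l gamma1). unfold gamma1, ip.
    integral_by_remainder gamma1_integrand gamma1_remainder 1 is_derive_gamma1_remainder.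
  - unfold gamma2, ip.
    integral_by_remainder gamma2_integrand gamma2_remainder 2 is_derive_gamma2_remainder.
  - rewrite <- (Rmult_1_l gamma3). unfold gamma3, ip.
    integral_by_remainder gamma3_integrand gamma3_remainder 1 is_derive_gamma3_remainder.
  - unfold gamma4, ip.
    integral_by_remainder gamma4_integrand gamma4_remainder (-2) is_derive_gamma4_remainder.
Qed.
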